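(* Let $f_i:\mathbb{R}^p\to\mathbb{R}$, $1\le i\le n$, be $L_i$-smooth for some $L_i>0$, and suppose $f=\frac1n\sum_{i=1}^nf_i$ takes the form $f(x)=g(Hx)$ for an $\alpha$-strongly convex ($\alpha>0$) and $\mathbf{L}$-smooth function $g:\mathbb{R}^m\to\mathbb{R}$ and $H\in\mathbb{R}^{m\times p}$, and that the set $X^*$ of minimizers of $f$ is nonempty. Assume one of the following holds: (1) each $f_i$ is bounded below, $1\le i\le n$; (2) $f_i(x)=f_i(x+v)$ for all $x\in\mathbb{R}^p$, all $v\in\mathrm{Ker}(H)$ and all $1\le i\le n$. Then $$\sup_{x\in X^*}\Big(\sum_{j=1}^n\|\nabla f_j(x)\|^2\Big)^{1/2}<\infty.$$
   Context: $h$ is $L$-smooth if $\|\nabla h(x)-\nabla h(y)\|\le L\|x-y\|$ for all $x,y$; $\alpha$-strongly convex if $h(y)\ge h(x)+\langle y-x,\nabla h(x)\rangle+\frac\alpha2\|y-x\|^2$ for all $x,y$. $X^*=\{x\in\mathbb{R}^p: f(x)=\min f\}$. Norms are Euclidean. *)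

From HB Require Import structures.
From mathcomp Require Import all_boot all_order all_algebra.
From mathcomp Require Import all_classical all_reals all_analysis.
Set Implicit Arguments. Unset Strict Implicit. Unset Printing Implicit Defensive.
Import Order.TTheory GRing.Theory Num.Theory.
Import numFieldNormedType.Exports.
Local Open Scope ring_scope.

Definition dotv {R : realType} {k : nat} (u v : 'cV[R]_k) : R :=
  \sum_(i < k) u i 0 * v i 0.
Definition enorm {R : realType} {k : nat} (v : 'cV[R]_k) : R :=
  Num.sqrt (dotv v v).

(* gf is the gradient of f: f is (Frechet) differentiable everywhere and its
   differential at x is v |-> <gf x, v>.  (Differentiability does not depend
   on the choice of norm in finite dimension.) *)
Definition is_gradient {R : realType} {k : nat}
  (f : 'cV[R]_k -> R) (gf : 'cV[R]_k -> 'cV[R]_k) : Prop :=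
  forall x, differentiable f x /\ forall v, ('d f x : 'cV[R]_k -> R) v = dotv (gf x) v.

Definition L_smooth {R : realType} {k : nat}
  (f : 'cV[R]_k -> R) (gf : 'cV[R]_k -> 'cV[R]_k) (L : R) : Prop :=
  is_gradient f gf /\ forall x y, enorm (gf x - gf y) <= L * enorm (x - y).

Definition strongly_convex {R : realType} {k : nat}
  (f : 'cV[R]_k -> R) (gf : 'cV[R]_k -> 'cV[R]_k) (alpha : R) : Prop :=
  is_gradient f gf /\
  forall x y, f y >= f x + dotv (y - x) (gf x) + alpha / 2 * enorm (y - x) ^+ 2.

Definition argmin_set {R : realType} {k : nat} (h : 'cV[R]_k -> R) : set 'cV[R]_k :=
  [set x | forall y, h x <= h y].

(* Case (1): the descent lemma for an L_i-smooth f_i bounded below by b_i gives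
   |grad f_i x|^2 <= 4 L_i (f_i x - b_i), and on X^* the sum of the f_i is the
   constant minimal value, so every gap f_i x - b_i is at most
   sum_j (f_j x* - b_j).
   Case (2): comparing g at the midpoint of H x and H x*, strong convexity forces
   H x = H x* for any two minimizers x, x*; hence x - x* lies in Ker H, and the
   gradients of the Ker H-invariant f_i agree at x and x*. *)

From HB Require Import structures.
From mathcomp Require Import all_boot all_order all_algebra.
From mathcomp Require Import all_classical all_reals all_analysis.
From mathcomp Require Import ring lra.
Set Implicit Arguments. Unset Strict Implicit. Unset Printing Implicit Defensive.
Import Order.TTheory GRing.Theory Num.Theory.
Import numFieldNormedType.Exports.
Local Open Scope ring_scope.

Section EuclideanGeometry.
Context {R : realType} {k : nat}.
Implicit Types (u v w : 'cV[R]_k) (a : R).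

Lemma dotvC u v : dotv u v = dotv v u.
Proof. by apply: eq_bigr => i _; rewrite mulrC. Qed.

Lemma dotvDl u v w : dotv (u + v) w = dotv u w + dotv v w.
Proof. by rewrite /dotv -big_split; apply: eq_bigr => i _; rewrite !mxE mulrDl. Qed.

Lemma dotvZl a u v : dotv (a *: u) v = a * dotv u v.
Proof. by rewrite /dotv mulr_sumr; apply: eq_bigr => i _; rewrite !mxE mulrA. Qed.

Lemma dotvNl u v : dotv (- u) v = - dotv u v.
Proof. by rewrite -scaleN1r dotvZl mulN1r. Qed.

Lemma dotvBl u v w : dotv (u - v) w = dotv u w - dotv v w.
Proof. by rewrite dotvDl dotvNl. Qed.

Lemma dotvZr a u v : dotv v (a *: u) = a * dotv v u.
Proof. by rewrite dotvC dotvZl dotvC. Qed.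

Lemma dotvNr u v : dotv v (- u) = - dotv v u.
Proof. by rewrite dotvC dotvNl dotvC. Qed.

Lemma dotvBr u v w : dotv w (u - v) = dotv w u - dotv w v.
Proof. by rewrite dotvC dotvBl !(dotvC w). Qed.

Lemma dotvv_ge0 u : 0 <= dotv u u.
Proof. by apply: sumr_ge0 => i _; rewrite -expr2 sqr_ge0. Qed.

Lemma dotvv_eq0 u : dotv u u = 0 -> u = 0.
Proof.
move=> /psumr_eq0P uu0; apply/matrixP => i j; rewrite ord1 mxE.
have /eqP : u i 0 * u i 0 = 0 by apply: uu0 => // l _; rewrite -expr2 sqr_ge0.
by rewrite mulf_eq0 orbb => /eqP.
Qed.

Lemma dotv_delta u (i : 'I_k) : dotv u (delta_mx i 0) = u i 0.
Proof.
rewrite /dotv (bigD1 i) //= big1 ?addr0; first by rewrite mxE !eqxx mulr1.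
by move=> j /negbTE ji; rewrite mxE ji mulr0.
Qed.

Lemma enorm_ge0 u : 0 <= enorm u.
Proof. exact: sqrtr_ge0. Qed.

Lemma enorm_sqr u : enorm u ^+ 2 = dotv u u.
Proof. by rewrite sqr_sqrtr // dotvv_ge0. Qed.

Lemma enormZ a u : enorm (a *: u) = `|a| * enorm u.
Proof.
by rewrite /enorm dotvZl dotvZr mulrA -expr2 sqrtrM ?sqr_ge0 // sqrtr_sqr.
Qed.

(* Expand [0 <= |u - a v|^2]. *)
Lemma dotv_le_of_enorm_le u v a :
  0 < a -> enorm u <= a * enorm v -> dotv u v <= a * dotv v v.
Proof.
move=> a0 uv.
have uv2 : dotv u u <= a ^+ 2 * dotv v v.
  by rewrite -!enorm_sqr; have := enorm_ge0 u; nra.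
have := dotvv_ge0 (u - a *: v).
rewrite !(dotvBl, dotvBr, dotvZl, dotvZr) (dotvC v u).
have := dotvv_ge0 v; nra.
Qed.

End EuclideanGeometry.

Section Gradient.
Context {R : realType} {k : nat}.
Variables (f : 'cV[R]_k -> R) (gf : 'cV[R]_k -> 'cV[R]_k).
Hypothesis f_grad : is_gradient f gf.
Implicit Types (x v : 'cV[R]_k) (t : R).

Lemma gradient_derive x v : derive f x v = dotv (gf x) v.
Proof. by have [fx_diff dfx] := f_grad x; rewrite (deriveE v fx_diff) dfx. Qed.

Lemma gradient_translation_invariant v :
  (forall y, f (y + v) = f y) -> forall x, gf (x + v) = gf x.
Proof.
move=> fv x; apply/matrixP => i j; rewrite ord1 -!(dotv_delta _ i) -!gradient_derive.
have quotE : (fun h : R => h^-1 *: ((f \o shift (x + v)) (h *: delta_mx i 0) - f (x + v)))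
    = (fun h : R => h^-1 *: ((f \o shift x) (h *: delta_mx i 0) - f x)).
  by apply: funext => h /=; rewrite addrA !fv.
by rewrite /derive quotE.
Qed.

Lemma gradient_line_derive x v t :
  is_derive t 1 (fun s : R => f (x + s *: v)) (dotv (gf (x + t *: v)) v).
Proof.
have line_quotE : (fun h : R => h^-1 *: (((fun s => f (x + s *: v)) \o shift t) (h *: 1)
                                        - f (x + t *: v)))
    = (fun h : R => h^-1 *: ((f \o shift (x + t *: v)) (h *: v) - f (x + t *: v))).
  by apply: funext => h /=; rewrite scaler1 scalerDl addrCA addrA.
have [fxt_diff _] := f_grad (x + t *: v).
apply: DeriveDef; rewrite /derivable /derive line_quotE.
  exact: diff_derivable.
exact: gradient_derive.
Qed.

End Gradient.

Section Smooth.
Context {R : realType} {k : nat}.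
Variables (f : 'cV[R]_k -> R) (gf : 'cV[R]_k -> 'cV[R]_k) (L : R).
Hypotheses (f_smooth : L_smooth f gf L) (L_gt0 : 0 < L).
Implicit Types (x d : 'cV[R]_k) (b : R).

Lemma L_smooth_descent x d : f (x + d) <= f x + dotv (gf x) d + L * dotv d d.
Proof.
have [f_grad gf_lip] := f_smooth.
pose phi s := f (x + s *: d).
have phi_der s := gradient_line_derive f_grad x d s.
have phi_cont : {within `[0, 1], continuous phi}%classic.
  by apply: derivable_within_continuous => s _; exact: (@ex_derive _ _ _ _ _ _ _ (phi_der s)).
have [c] := MVT ltr01 (fun s _ => phi_der s) phi_cont.
rewrite in_itv /= => /andP[c_gt0 c_lt1].
rewrite /phi scale1r scale0r addr0 subr0 mulr1 => mvt.
set a := gf (x + c *: d) - gf x.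
have a_le : enorm a <= L * enorm d.
  apply: le_trans (gf_lip _ _) _; rewrite addrC addKr enormZ ler_wpM2l ?(ltW L_gt0) //.
  by rewrite ger0_norm ?(ltW c_gt0) //; have := enorm_ge0 d; nra.
have := dotv_le_of_enorm_le L_gt0 a_le.
by rewrite /a dotvBl; lra.
Qed.

(* Take the step [d = - (2L)^-1 gf x] in the descent lemma. *)
Lemma L_smooth_gradient_bound b x :
  (forall y, b <= f y) -> dotv (gf x) (gf x) <= 4 * L * (f x - b).
Proof.
move=> f_ge_b; set s := (2 * L)^-1.
have s_gt0 : 0 < s by rewrite /s invr_gt0 mulr_gt0.
have := L_smooth_descent x (- s *: gf x).
rewrite dotvZr !dotvZl dotvZr.
have := f_ge_b (x + - s *: gf x).
set G := dotv (gf x) (gf x) => b_le descent.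
have gap : s * G / 2 <= f x - b.
  have quad : L * (- s * (- s * G)) = s * G / 2 by rewrite /s; field; rewrite gt_eqF.
  lra.
have -> : G = 4 * L * (s * G / 2) by rewrite /s; field; rewrite gt_eqF.
by rewrite ler_wpM2l // mulr_ge0 // ltW.
Qed.

End Smooth.

Section StronglyConvex.
Context {R : realType} {m : nat}.
Variables (g : 'cV[R]_m -> R) (gg : 'cV[R]_m -> 'cV[R]_m) (alpha : R).
Hypothesis g_sconv : strongly_convex g gg alpha.
Implicit Types y z : 'cV[R]_m.

Lemma strongly_convex_midpoint y z :
  2 * g (2^-1 *: (y + z)) + alpha / 4 * dotv (y - z) (y - z) <= g y + g z.
Proof.
have [_ sconv] := g_sconv.
set w := 2^-1 *: (y + z); set u := y - w.
have zwE : z - w = - u by apply/matrixP => i j; rewrite !mxE; lra.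
have yzE : y - z = 2 *: u by apply/matrixP => i j; rewrite !mxE; lra.
have := sconv w y; have := sconv w z.
rewrite zwE yzE -/u !enorm_sqr !(dotvNl, dotvNr) opprK !dotvZl dotvZr.
have -> : alpha / 4 * (2 * (2 * dotv u u)) = alpha / 2 * dotv u u + alpha / 2 * dotv u u.
  by field.
lra.
Qed.

Lemma strongly_convex_midpoint_ge_eq y z : 0 < alpha ->
  g y <= g (2^-1 *: (y + z)) -> g z <= g (2^-1 *: (y + z)) -> y = z.
Proof.
move=> alpha_gt0 gy_le gz_le; apply/eqP; rewrite -subr_eq0; apply/eqP/dotvv_eq0.
apply/le_anti; rewrite dotvv_ge0 andbT.
have := strongly_convex_midpoint y z; nra.
Qed.

Lemma argmin_mulmx_eq p (H : 'M[R]_(m, p)) x x' : 0 < alpha ->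
  argmin_set (fun x => g (H *m x)) x -> argmin_set (fun x => g (H *m x)) x' ->
  H *m x = H *m x'.
Proof.
move=> alpha_gt0 x_min x'_min.
by apply: strongly_convex_midpoint_ge_eq; rewrite // -mulmxDr scalemxAr;
  [exact: x_min | exact: x'_min].
Qed.

End StronglyConvex.

Lemma sum_gradient_sqr_le_of_lbound {R : realType} {n p : nat}
    (f : 'I_n -> 'cV[R]_p -> R) (gf : 'I_n -> 'cV[R]_p -> 'cV[R]_p) (L b : 'I_n -> R)
    (c : R) (x : 'cV[R]_p) :
  (forall i, L_smooth (f i) (gf i) (L i)) -> (forall i, 0 < L i) ->
  (forall i y, b i <= f i y) -> \sum_i f i x <= c ->
  \sum_j enorm (gf j x) ^+ 2 <= \sum_j 4 * L j * (c - \sum_i b i).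
Proof.
move=> f_smooth L_gt0 f_ge_b sum_le; apply: ler_sum => j _.
rewrite enorm_sqr; apply: le_trans (L_smooth_gradient_bound (f_smooth j) (L_gt0 j) x (f_ge_b j)) _.
rewrite ler_wpM2l ?mulr_ge0 ?(ltW (L_gt0 j)) //.
apply: le_trans _ (lerB sum_le (lexx (\sum_i b i))); rewrite -sumrB (bigD1 j) //= lerDl.
by apply: sumr_ge0 => i _; rewrite subr_ge0.
Qed.

Theorem lemma2p14 (R : realType) (n p m : nat) (hn : (0 < n)%N)
  (f : 'I_n -> 'cV[R]_p -> R) (gf : 'I_n -> 'cV[R]_p -> 'cV[R]_p) (L : 'I_n -> R)
  (hL : forall i, 0 < L i) (hsmooth : forall i, L_smooth (f i) (gf i) (L i))
  (g : 'cV[R]_m -> R) (gg : 'cV[R]_m -> 'cV[R]_m) (alpha Lg : R)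
  (halpha : 0 < alpha) (hgconv : strongly_convex g gg alpha) (hgsmooth : L_smooth g gg Lg)
  (H : 'M[R]_(m, p))
  (hf : forall x, n%:R^-1 * (\sum_(i < n) f i x) = g (H *m x))
  (hne : exists x0, argmin_set (fun x => n%:R^-1 * (\sum_(i < n) f i x)) x0)
  (hcases : (forall i, exists b : R, forall x, b <= f i x) \/
            (forall i x v, H *m v = 0 -> f i (x + v) = f i x)) :
  exists M : R, forall x, argmin_set (fun x => n%:R^-1 * (\sum_(i < n) f i x)) x ->
    Num.sqrt (\sum_(j < n) enorm (gf j x) ^+ 2) <= M.
Proof.
have [x0 x0_min] := hne.
case: hcases => [f_lbound | f_ker_invariant].
- have [b f_ge_b] := choice f_lbound.
  exists (Num.sqrt (\sum_j 4 * L j * (\sum_i f i x0 - \sum_i b i))) => x x_min.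
  apply/ler_wsqrtr/sum_gradient_sqr_le_of_lbound => //.
  by have := x_min x0; rewrite ler_pM2l // invr_gt0 ltr0n.
- exists (Num.sqrt (\sum_j enorm (gf j x0) ^+ 2)) => x.
  rewrite (funext hf) in x0_min * => x_min.
  have Hx : H *m (x - x0) = 0.
    by rewrite mulmxBr (argmin_mulmx_eq hgconv halpha x_min x0_min) subrr.
  have gf_eq j : gf j x = gf j x0.
    rewrite -[x](addrNK x0) addrC (gradient_translation_invariant (hsmooth j).1) // => y.
    exact: f_ker_invariant.
  by under eq_bigr => j _ do rewrite gf_eq.
Qed.
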